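(* Let $\Theta$ be a set and $(f_\theta)_{\theta\in\Theta}$ a family of stable mappings $(0,\infty)\to(0,\infty)$ such that $\sup_\theta f_\theta$ and $\inf_\theta f_\theta$ take values in $(0,\infty)$. Then $\sup_{\theta\in\Theta}f_\theta$ and $\inf_{\theta\in\Theta}f_\theta$ are both stable.
   Context: A function $f:(0,\infty)\to(0,\infty)$ is stable if $|f(x)-f(y)|\le\sqrt{\frac{f(x)f(y)}{xy}}|x-y|$ for all $x,y>0$. *)

From Stdlib Require Import Reals Lra.
Open Scope R_scope.

(* A map f : (0,oo) -> (0,oo), represented as a total function R -> R whose
   values on (0,oo) are positive (values at x <= 0 are irrelevant), is stable if
   |f x - f y| <= sqrt (f x f y / (x y)) |x - y| for all x, y > 0. *)
Definition stable (f : R -> R) : Prop :=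
  (forall x, 0 < x -> 0 < f x) /\
  (forall x y, 0 < x -> 0 < y ->
     Rabs (f x - f y) <= sqrt (f x * f y / (x * y)) * Rabs (x - y)).

Definition is_lower_bound (E : R -> Prop) (m : R) : Prop :=
  forall x, E x -> m <= x.
Definition is_glb (E : R -> Prop) (m : R) : Prop :=
  is_lower_bound E m /\ (forall b, is_lower_bound E b -> b <= m).

(* Squaring the defining inequality shows that f is stable iff, for x <= y,
   x/y <= f y / f x <= y/x: in logarithmic coordinates, t |-> ln f (exp t) is
   1-Lipschitz.  This two-sided ratio bound is a family of inequalities
   f y * x <= f x * y and f x * x <= f y * y, each linear in the values of f
   with positive coefficients, so it passes to pointwise suprema and infima. *)
From Stdlib Require Import Reals Lra Psatz.
Open Scope R_scope.

Lemma stable_ineq_iff (a b x y : R) : 0 < a -> 0 < b -> 0 < x -> 0 < y ->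
  Rabs (a - b) <= sqrt (a * b / (x * y)) * Rabs (x - y) <->
  (a * x - b * y) * (a * y - b * x) <= 0.
Proof.
  intros Ha Hb Hx Hy.
  assert (Hq : 0 <= a * b / (x * y)) by (apply Rlt_le, Rdiv_lt_0_compat; nra).
  rewrite <- (Rabs_pos_eq _ (sqrt_pos (a * b / (x * y)))), <- Rabs_mult.
  transitivity ((a - b)² <= (sqrt (a * b / (x * y)) * (x - y))²).
  { split; [apply Rsqr_le_abs_1 | apply Rsqr_le_abs_0]. }
  rewrite Rsqr_mult, Rsqr_sqrt by exact Hq.
  assert (Hxy : x * y * (a * b / (x * y) * (x - y)²) = a * b * (x - y)²)
    by (field; lra).
  assert (Hid : (a * x - b * y) * (a * y - b * x)
                = x * y * (a - b)² - a * b * (x - y)²) by (unfold Rsqr; ring).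
  rewrite Hid, <- Hxy.
  split; intro H.
  - apply Rmult_le_compat_l with (r := x * y) in H; nra.
  - apply Rmult_le_reg_l with (x * y); nra.
Qed.

Definition log_lipschitz (f : R -> R) : Prop :=
  forall x y, 0 < x -> x <= y -> f y * x <= f x * y /\ f x * x <= f y * y.

Lemma stable_log_lipschitz (f : R -> R) : stable f -> log_lipschitz f.
Proof.
  intros [Hpos Hf] x y Hx Hxy.
  assert (Hy : 0 < y) by lra.
  pose proof (Hpos x Hx). pose proof (Hpos y Hy).
  pose proof (Hf x y Hx Hy) as Hprod.
  apply stable_ineq_iff in Hprod; auto.
  (* The two factors of [Hprod] differ by (f x + f y) (y - x) >= 0. *)
  assert (f x * x - f y * y <= f x * y - f y * x) by nra.
  split; nra.
Qed.

Lemma log_lipschitz_stable (f : R -> R) :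
  (forall x, 0 < x -> 0 < f x) -> log_lipschitz f -> stable f.
Proof.
  intros Hpos Hf. split; [exact Hpos |].
  intros x y Hx Hy.
  apply stable_ineq_iff; auto.
  destruct (Rle_or_lt x y) as [Hxy | Hyx].
  - destruct (Hf x y Hx Hxy). nra.
  - destruct (Hf y x Hy (Rlt_le _ _ Hyx)). nra.
Qed.

Section ScaledBounds.

Variables (Theta : Type) (g h : Theta -> R) (u v : R).
Hypotheses (Hu : 0 < u) (Hv : 0 < v) (Hgh : forall t, g t * u <= h t * v).

Lemma lub_mul_le (G H : R) :
  is_lub (fun z => exists t, z = g t) G -> is_lub (fun z => exists t, z = h t) H ->
  G * u <= H * v.
Proof.
  intros [_ HG] [HH _].
  assert (G <= H * v / u).
  { apply HG. intros z [t ->].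
    apply Rmult_le_reg_r with u; [exact Hu |].
    replace (H * v / u * u) with (H * v) by (field; lra).
    specialize (HH (h t) (ex_intro _ t eq_refl)). specialize (Hgh t). nra. }
  replace (H * v) with (H * v / u * u) by (field; lra).
  nra.
Qed.

Lemma glb_mul_le (G H : R) :
  is_glb (fun z => exists t, z = g t) G -> is_glb (fun z => exists t, z = h t) H ->
  G * u <= H * v.
Proof.
  intros [HG _] [_ HH].
  assert (G * u / v <= H).
  { apply HH. intros z [t ->].
    apply Rmult_le_reg_r with v; [exact Hv |].
    replace (G * u / v * v) with (G * u) by (field; lra).
    specialize (HG (g t) (ex_intro _ t eq_refl)). specialize (Hgh t). nra. }
  replace (G * u) with (G * u / v * v) by (field; lra).
  nra.
Qed.

End ScaledBounds.

Lemma log_lipschitz_lub (Theta : Type) (f : Theta -> R -> R) (S : R -> R) :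
  (forall t, log_lipschitz (f t)) ->
  (forall x, 0 < x -> is_lub (fun z => exists t, z = f t x) (S x)) ->
  log_lipschitz S.
Proof.
  intros Hf HS x y Hx Hxy.
  assert (Hy : 0 < y) by lra.
  split.
  - apply (lub_mul_le Theta (fun t => f t y) (fun t => f t x)); auto.
    intro t. apply (Hf t x y Hx Hxy).
  - apply (lub_mul_le Theta (fun t => f t x) (fun t => f t y)); auto.
    intro t. apply (Hf t x y Hx Hxy).
Qed.

Lemma log_lipschitz_glb (Theta : Type) (f : Theta -> R -> R) (I : R -> R) :
  (forall t, log_lipschitz (f t)) ->
  (forall x, 0 < x -> is_glb (fun z => exists t, z = f t x) (I x)) ->
  log_lipschitz I.
Proof.
  intros Hf HI x y Hx Hxy.
  assert (Hy : 0 < y) by lra.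
  split.
  - apply (glb_mul_le Theta (fun t => f t y) (fun t => f t x)); auto.
    intro t. apply (Hf t x y Hx Hxy).
  - apply (glb_mul_le Theta (fun t => f t x) (fun t => f t y)); auto.
    intro t. apply (Hf t x y Hx Hxy).
Qed.

Theorem corollary1 (Theta : Type) (f : Theta -> R -> R) (S I : R -> R) :
  (forall t : Theta, stable (f t)) ->
  (forall x, 0 < x -> is_lub (fun y => exists t : Theta, y = f t x) (S x) /\ 0 < S x) ->
  (forall x, 0 < x -> is_glb (fun y => exists t : Theta, y = f t x) (I x) /\ 0 < I x) ->
  stable S /\ stable I.
Proof.
  intros Hf HS HI.
  assert (Hlog : forall t, log_lipschitz (f t))
    by (intro t; apply stable_log_lipschitz, Hf).
  split; apply log_lipschitz_stable.
  - intros x Hx. apply (HS x Hx).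
  - apply (log_lipschitz_lub Theta f); auto. intros x Hx. apply (HS x Hx).
  - intros x Hx. apply (HI x Hx).
  - apply (log_lipschitz_glb Theta f); auto. intros x Hx. apply (HI x Hx).
Qed.
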